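(* Let $n,k\ge1$ and let $x_1,\dots,x_j$ be distinct nodes of $\Gamma_{2^n}$ such that the subgraph of $\Gamma_{2^n}$ induced on $\{x_1,\dots,x_j\}$ is exactly the directed cycle $x_1\to x_2\to\cdots\to x_j\to x_1$. Then the subgraph of $\Gamma_{2^{n+k-1}}$ induced on $\overline{H}_{M_k}^{-1}(\{x_1,\dots,x_j\})$ is a disjoint union of directed cycles.
   Context: $T(x)=x/2$ for $x$ even, $T(x)=(3x+1)/2$ for $x$ odd, extended to $\mathbb{Z}_2$; $T_0(x)=x/2$, $T_1(x)=(3x+1)/2$. $\Gamma_d$ is the directed graph on $\mathbb{Z}/d\mathbb{Z}$ with a black arrow $r\to s$ iff there exist positive integers $x\equiv r$, $y\equiv s\pmod d$ with $x$ even and $T_0(x)=y$, and a red arrow $r\to s$ iff there exist such $x,y$ with $x$ odd and $T_1(x)=y$. The parity vector map $\Phi^{-1}:\mathbb{Z}_2\to\mathbb{Z}_2$ is $\Phi^{-1}(x)=\sum_{i\ge0}(T^i(x)\bmod 2)2^i$; it is a bijection with inverse $\Phi$. For $k\ge1$, $M_k(\sum_i a_i2^i)=\sum_i m_i2^i$ with $m_i\equiv a_i+\cdots+a_{i+k-1}\pmod2$, and $H_{M_k}=\Phi\circ M_k\circ\Phi^{-1}$, which commutes with $T$. The residue of $H_{M_k}(x)$ mod $2^n$ depends only on $x$ mod $2^{n+k-1}$; $\overline{H}_{M_k}:\mathbb{Z}/2^{n+k-1}\mathbb{Z}\to\mathbb{Z}/2^n\mathbb{Z}$ is the induced map. *)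

From mathcomp Require Import all_boot.
Set Implicit Arguments. Unset Strict Implicit. Unset Printing Implicit Defensive.

(* black arrow r -> s : positive x = r, y = s (mod d), x even, T_0 x = x/2 = y
   red   arrow r -> s : positive x = r, y = s (mod d), x odd, T_1 x = (3x+1)/2 = y *)
Definition gamma_black (d r s : nat) : Prop :=
  exists x y, 0 < x /\ 0 < y /\ x %% d = r %% d /\ y %% d = s %% d /\
              ~~ odd x /\ x./2 = y.
Definition gamma_red (d r s : nat) : Prop :=
  exists x y, 0 < x /\ 0 < y /\ x %% d = r %% d /\ y %% d = s %% d /\
              odd x /\ (3 * x + 1)./2 = y.
Definition gamma_edge (d r s : nat) : Prop := gamma_black d r s \/ gamma_red d r s.

(* x : nat -> nat represents the 2-adic integer with x m = (x mod 2^m). *)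
Definition padic (x : nat -> nat) : Prop :=
  forall m, x m < 2 ^ m /\ x m.+1 %% 2 ^ m = x m.

Definition Tz (x : nat -> nat) : nat -> nat := fun m =>
  if odd (x 1) then ((3 * x m.+1 + 1) %% 2 ^ m.+1)./2 else (x m.+1)./2.

Definition zbit (a : nat -> nat) (i : nat) : bool := odd (a i.+1 %/ 2 ^ i).

Definition phiinv (x : nat -> nat) : nat -> nat := fun m =>
  \sum_(i < m) (odd (iter i Tz x 1)) * 2 ^ i.

Definition Mk (k : nat) (a : nat -> nat) : nat -> nat := fun m =>
  \sum_(i < m) ((\sum_(l < k) zbit a (i + l)) %% 2) * 2 ^ i.

(* Hbar_{M_k} : Z/2^(n+k-1) -> Z/2^n, given relationally:
   Hbar r = s  iff  some 2-adic x = r (mod 2^(n+k-1)) has H_{M_k}(x) = s (mod 2^n),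
   where H_{M_k}(x) = y  iff  Phi^{-1}(y) = M_k(Phi^{-1}(x)). *)
Definition Hbar_rel (n k r s : nat) : Prop :=
  exists x y, padic x /\ padic y /\ x (n + k - 1) = r /\ y n = s /\
              (forall m, phiinv y m = Mk k (phiinv x) m).

Definition induced_is_cycle (T : eqType) (E : T -> T -> Prop) (xs : seq T) : Prop :=
  forall u v, u \in xs -> v \in xs -> (E u v <-> v = next xs u).

Definition induced_disjoint_cycles (T : eqType) (E : T -> T -> Prop) (S : T -> Prop) : Prop :=
  exists cs : seq (seq T),
    all (fun c => c != [::]) cs /\ uniq (flatten cs) /\
    (forall v, S v <-> v \in flatten cs) /\
    (forall u v, S u -> S v ->
       (E u v <-> exists2 c, c \in cs & u \in c /\ v = next c u)).

From mathcomp Require Import all_boot zify.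
Set Implicit Arguments. Unset Strict Implicit. Unset Printing Implicit Defensive.

(* Write T for the Collatz map on nat and let n, k >= 1.
   1. Arrows.  In Gamma_{2B} there is an arrow r -> s iff s = T r (mod B)
      (gamma_edge_iff); so r has exactly two out-neighbours, the two lifts
      mod 2B of T r mod B.
   2. Parity vectors (Lagarias).  The first m parities of the T-orbit of a
      determine a mod 2^m, and every pattern occurs (parity_eq_mod,
      parity_surj); residue_of b m is the residue realising the pattern b.
   3. Hbar.  Unfolding the 2-adic definitions, Hbar_{M_k}(r) is the residue
      mod 2^n whose parities are the mod-2 sums of k consecutive parities of
      r (Hbar_relE).  Hence Hbar maps arrows to arrows, separates the two
      lifts of a residue, and separates two residues with congruent images
      under T (hbar_collatz, hbar_lifts_neq, hbar_preimages_neq).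
   4. On the preimage S of the cycle, every vertex u thus has exactly one
      out-neighbour in S, the lift lying over the successor of Hbar(u) on the
      cycle, and this successor map is injective on S (section LiftCycle).
   5. An injective self-map of a finite set S whose graph is the induced
      arrow relation splits S into its orbits, which are disjoint directed
      cycles (induced_disjoint_cycles_of_inj). *)

Definition collatz (a : nat) : nat := if odd a then (3 * a + 1)./2 else a./2.

Definition parity (a i : nat) : bool := odd (iter i collatz a).

Lemma parityS a i : parity a i.+1 = parity (collatz a) i.
Proof. by rewrite /parity iterSr. Qed.

Lemma parity_iter a i l : parity (iter i collatz a) l = parity a (i + l).
Proof. by rewrite /parity -iterD addnC. Qed.

Lemma odd_modM2 c M : odd (c %% (M * 2)) = odd c.
Proof. by rewrite odd_mod // oddM andbF. Qed.

Lemma half_modM2 c M : (c %% (M * 2))./2 = c./2 %% M.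
Proof. by rewrite -!divn2 modn_divl. Qed.

Lemma eqn_modM2 c d M :
  (c == d %[mod M * 2]) = (odd c == odd d) && (c./2 == d./2 %[mod M]).
Proof.
apply/eqP/andP => [E | [/eqP Ho /eqP Hh]].
  by rewrite -(odd_modM2 c M) E odd_modM2 -!half_modM2 E.
by rewrite -[c %% _]odd_double_half -[d %% _]odd_double_half !odd_modM2 !half_modM2 Ho Hh.
Qed.

Lemma eqn_modM_coprime d c a b : coprime d c -> (c * a == c * b %[mod d]) = (a == b %[mod d]).
Proof.
move=> cop; wlog le_ba : a b / b <= a.
  by move=> W; case: (leqP b a) => [|/ltnW] h; [|rewrite eq_sym [RHS]eq_sym]; apply: W.
by rewrite !eqn_mod_dvd ?leq_mul2l ?le_ba ?orbT // -mulnBr Gauss_dvdr.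
Qed.

Lemma collatz_mod a b M : a = b %[mod M * 2] -> collatz a = collatz b %[mod M].
Proof.
move=> E; have Ho : odd a = odd b by rewrite -(odd_modM2 a M) E odd_modM2.
rewrite /collatz -Ho; case: ifP => _; rewrite -!half_modM2; last by rewrite E.
by rewrite -modnDml -modnMmr E modnMmr modnDml.
Qed.

(* Conversely, the parity of a and T a mod 2^j determine a mod 2^(j+1),
   since 3 is a unit mod 2^j. *)
Lemma collatz_mod_inv a b j :
  odd a = odd b -> collatz a = collatz b %[mod 2 ^ j] -> a = b %[mod 2 ^ j.+1].
Proof.
rewrite /collatz => Ho; rewrite -Ho; case: ifP => oa E; apply/eqP.
  rewrite -(eqn_modM_coprime _ _ (coprimeXl j.+1 (isT : coprime 2 3))).
  by rewrite -(eqn_modDr 1) expnSr eqn_modM2 E !oddD Ho !eqxx.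
by rewrite expnSr eqn_modM2 Ho E !eqxx.
Qed.

Lemma parity_eq_mod m a b :
  (forall i, i < m -> parity a i = parity b i) <-> a = b %[mod 2 ^ m].
Proof.
elim: m a b => [|m IH] a b; first by rewrite !modn1.
split=> [E | E [_ | i lt_im]].
- apply: collatz_mod_inv; first exact: (E 0).
  by apply/IH => i lt_im; rewrite -!parityS E.
- by rewrite /parity /= -(odd_modM2 a (2 ^ m)) -expnSr E expnSr odd_modM2.
- by rewrite !parityS; apply: (proj2 (IH _ _)) lt_im; apply: collatz_mod; rewrite -expnSr.
Qed.

Lemma parity_mod a m i : i < m -> parity (a %% 2 ^ m) i = parity a i.
Proof. by move=> lt_im; apply: (proj2 (parity_eq_mod m _ _)) lt_im; rewrite modn_mod. Qed.

(* Every parity pattern of length m is realised below 2^m: by the previous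
   lemma the residues inject into the patterns, and both sets have size 2^m. *)
Lemma parity_surj m (b : nat -> bool) :
  exists2 a, a < 2 ^ m & forall i, i < m -> parity a i = b i.
Proof.
pose F (a : 'I_(2 ^ m)) : {ffun 'I_m -> bool} := [ffun i : 'I_m => parity a i].
have injF : injective F.
  move=> x y /ffunP Fxy; apply: val_inj => /=.
  rewrite -(modn_small (ltn_ord x)) -(modn_small (ltn_ord y)).
  by apply/parity_eq_mod => i lt_im; have := Fxy (Ordinal lt_im); rewrite !ffunE.
have cardF : #|{ffun 'I_m -> bool}| <= #|'I_(2 ^ m)|.
  by rewrite card_ffun card_bool !card_ord.
have /codomP[a Fa] := inj_card_onto injF cardF [ffun i : 'I_m => b i].
exists a => // i lt_im; have := congr1 (fun g : {ffun _ -> _} => g (Ordinal lt_im)) Fa.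
by rewrite !ffunE.
Qed.

Lemma iter_collatz_mod a b i j : a = b %[mod 2 ^ (i + j)] ->
  iter i collatz a = iter i collatz b %[mod 2 ^ j].
Proof.
move=> E; apply/parity_eq_mod => l lt_lj; rewrite !parity_iter.
by apply: (proj2 (parity_eq_mod (i + j) _ _) E); rewrite ltn_add2l.
Qed.

Definition residue_of (b : nat -> bool) (m : nat) : nat :=
  if [pick a : 'I_(2 ^ m) | [forall i : 'I_m, parity a i == b i]] is Some a
  then val a else 0.

Lemma residue_ofP b m :
  residue_of b m < 2 ^ m /\ forall i, i < m -> parity (residue_of b m) i = b i.
Proof.
rewrite /residue_of; case: pickP => [a /forallP Ha | none].
  by split=> [|i lt_im]; [exact: ltn_ord | exact/eqP/(Ha (Ordinal lt_im))].
have [a lt_a Ha] := parity_surj m b; have /negbT/forallPn[i] := none (Ordinal lt_a).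
by rewrite /= Ha // eqxx.
Qed.

Lemma residue_of_lt b m : residue_of b m < 2 ^ m.
Proof. exact: (proj1 (residue_ofP b m)). Qed.

Lemma residue_of_parity b m i : i < m -> parity (residue_of b m) i = b i.
Proof. exact: (proj2 (residue_ofP b m)). Qed.

Lemma residue_of_unique b m s :
  s < 2 ^ m -> (forall i, i < m -> parity s i = b i) -> s = residue_of b m.
Proof.
move=> lt_s Hs; rewrite -(modn_small lt_s) -(modn_small (residue_of_lt b m)).
by apply/parity_eq_mod => i lt_im; rewrite Hs // residue_of_parity.
Qed.

Lemma padic_mod x m p : padic x -> m <= p -> x p %% 2 ^ m = x m.
Proof.
move=> px; elim: p => [|p IH].
  by rewrite leqn0 => /eqP->; rewrite modn_small //; case: (px 0).
rewrite leq_eqVlt => /predU1P[->|lt_mp]; first by rewrite modn_small //; case: (px p.+1).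
by rewrite -(IH lt_mp); case: (px p) => _ <-; rewrite modn_dvdm // dvdn_exp2l.
Qed.

Lemma Tz_val x m : padic x -> Tz x m = collatz (x m.+1) %% 2 ^ m.
Proof.
move=> px; rewrite /Tz /collatz -(padic_mod px (ltn0Sn m)) odd_mod ?odd_exp //.
have lt_x : x m.+1 < 2 ^ m * 2 by rewrite -expnSr; case: (px m.+1).
by case: ifP => _; [rewrite expnSr | rewrite -{1}(modn_small lt_x)]; rewrite half_modM2.
Qed.

Lemma Tz_padic x : padic x -> padic (Tz x).
Proof.
move=> px m; rewrite !Tz_val //; split; first by rewrite ltn_pmod ?expn_gt0.
rewrite modn_dvdm ?dvdn_exp2l //; apply: collatz_mod.
by rewrite -expnSr; case: (px m.+1) => lt_x ->; rewrite modn_small.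
Qed.

Lemma iter_Tz x i : padic x ->
  padic (iter i Tz x) /\ forall j, iter i Tz x j = iter i collatz (x (i + j)) %% 2 ^ j.
Proof.
elim: i x => [|i IH] x px.
  by split=> // j; rewrite modn_small //; case: (px j).
have [pTx HTx] := IH _ (Tz_padic px); rewrite iterSr; split=> // j.
rewrite HTx Tz_val // iterSr addSn; apply: iter_collatz_mod; exact: modn_mod.
Qed.

Lemma padic_parity x i m : padic x -> i < m -> odd (iter i Tz x 1) = parity (x m) i.
Proof.
move=> px lt_im; have [_ ->] := iter_Tz i px.
rewrite odd_mod // addn1 -(padic_mod px lt_im) -/(parity _ i).
exact: parity_mod.
Qed.

Definition nat_padic (r : nat) : nat -> nat := fun m => r %% 2 ^ m.

Lemma nat_padicP r : padic (nat_padic r).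
Proof.
move=> m; split; first by rewrite ltn_pmod ?expn_gt0.
by rewrite /nat_padic modn_dvdm // dvdn_exp2l.
Qed.

Lemma residue_of_padic b : padic (residue_of b).
Proof.
move=> m; split; first exact: residue_of_lt.
apply: residue_of_unique; first by rewrite ltn_pmod ?expn_gt0.
by move=> i lt_im; rewrite parity_mod // residue_of_parity // ltnW.
Qed.

Lemma residue_of_bits b i : odd (iter i Tz (residue_of b) 1) = b i.
Proof. by rewrite (padic_parity (residue_of_padic b) (ltnSn i)) residue_of_parity. Qed.

Lemma binary_lt (b : nat -> bool) m : \sum_(i < m) b i * 2 ^ i < 2 ^ m.
Proof.
elim: m => [|m IH]; first by rewrite big_ord0.
rewrite big_ord_recr /= expnS mul2n -addnn.
apply: leq_trans (_ : 2 ^ m + b m * 2 ^ m <= _); first by rewrite ltn_add2r.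
by rewrite leq_add2l; case: (b m); rewrite ?mul1n ?mul0n.
Qed.

Lemma binary_digit (b : nat -> bool) j :
  odd ((\sum_(i < j.+1) b i * 2 ^ i) %/ 2 ^ j) = b j.
Proof.
rewrite big_ord_recr /= addnC divnMDl ?expn_gt0 // divn_small ?binary_lt // addn0.
by case: (b j).
Qed.

Lemma binary_inj (b c : nat -> bool) :
  (forall m, \sum_(i < m) b i * 2 ^ i = \sum_(i < m) c i * 2 ^ i) -> b =1 c.
Proof. by move=> E j; rewrite -binary_digit E binary_digit. Qed.

Lemma Mk_phiinv k x m : Mk k (phiinv x) m =
  \sum_(i < m) odd (\sum_(l < k) odd (iter (i + l) Tz x 1)) * 2 ^ i.
Proof.
apply: eq_bigr => i _; rewrite modn2; congr (nat_of_bool (odd _) * _).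
apply: eq_bigr => l _; congr nat_of_bool.
exact: (binary_digit (fun j => odd (iter j Tz x 1))).
Qed.

(* Digit i of M_k applied to the parity vector of r: the parity of the sum
   of k consecutive parities of r. *)
Definition window_parity (k r i : nat) : bool := odd (\sum_(l < k) parity r (i + l)).

Definition hbar (n k r : nat) : nat := residue_of (window_parity k r) n.

Lemma Hbar_relE n k r s : r < 2 ^ (n + k - 1) -> s < 2 ^ n ->
  Hbar_rel n k r s <-> s = hbar n k r.
Proof.
move=> lt_r lt_s; have window i l : i < n -> l < k -> i + l < n + k - 1 by lia.
split.
  case=> x [y [px [py [xr [ys Hxy]]]]]; subst r s.
  have bits := @binary_inj (fun i => odd (iter i Tz y 1))
    (fun i => odd (\sum_(l < k) odd (iter (i + l) Tz x 1)))
    (fun m => etrans (Hxy m) (Mk_phiinv k x m)).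
  apply: residue_of_unique => // i lt_in; rewrite -(padic_parity py lt_in) bits.
  by congr (odd _); apply: eq_bigr => l _; rewrite (padic_parity px (window _ _ lt_in (ltn_ord l))).
move=> ->; pose b i := odd (\sum_(l < k) odd (iter (i + l) Tz (nat_padic r) 1)).
exists (nat_padic r), (residue_of b); split; first exact: nat_padicP.
split; first exact: residue_of_padic.
split; first by rewrite /nat_padic modn_small.
split=> [|m]; last by rewrite Mk_phiinv /phiinv; apply: eq_bigr => i _; rewrite residue_of_bits.
apply/esym/residue_of_unique => [|i lt_in]; first exact: residue_of_lt.
rewrite residue_of_parity // /b; congr (odd _); apply: eq_bigr => l _.
by rewrite (padic_parity (nat_padicP r) (window _ _ lt_in (ltn_ord l))) /nat_padic modn_small.
Qed.

Section Lifts.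
Variable B : nat.
Hypothesis B_gt0 : 0 < B.

Lemma modn_double x : x %% (B * 2) = x %% B + B * odd (x %/ B).
Proof.
have lt_x : x %% B + B * odd (x %/ B) < B * 2 by have := ltn_pmod x B_gt0; case: odd; lia.
have def_x : x = (x %/ B)./2 * (B * 2) + (x %% B + B * odd (x %/ B)).
  move: (divn_eq x B) (odd_double_half (x %/ B)); rewrite -muln2; lia.
by rewrite {1}def_x modnMDl modn_small.
Qed.

Lemma divn_addr x : (x + B) %/ B = (x %/ B).+1.
Proof. by rewrite divnDr // divnn B_gt0 addn1. Qed.

Lemma lift_cases t v : v < B * 2 -> v = t %[mod B] ->
  v = t %% (B * 2) \/ v = (t + B) %% (B * 2).
Proof.
move=> lt_v E; rewrite !modn_double divn_addr modnDr -E /= -{1 3}(modn_small lt_v) modn_double.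
by case: (odd (v %/ B)); case: (odd (t %/ B)); [left|right|right|left].
Qed.

Lemma lifts_neq t : t %% (B * 2) != (t + B) %% (B * 2).
Proof. by rewrite !modn_double divn_addr modnDr /=; case: odd => /=; lia. Qed.

Lemma lift_other a b c : a < B * 2 -> b < B * 2 -> c < B * 2 ->
  a = c %[mod B] -> b = c %[mod B] -> a != b -> c = a \/ c = b.
Proof.
move=> lt_a lt_b lt_c Ea Eb; have [-> | def_b] := lift_cases lt_b (etrans Eb (esym Ea)).
  by rewrite modn_small ?eqxx.
have [-> | ->] := lift_cases lt_c (esym Ea); first by left; rewrite modn_small.
by right; rewrite def_b.
Qed.

Lemma collatz_addr r : collatz (r + B * 2) = collatz r + B %[mod B * 2].
Proof.
rewrite /collatz oddD oddM andbF addbF -!divn2; case: (odd r).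
  have -> : 3 * (r + B * 2) + 1 = (3 * r + 1) + (B * 3) * 2 by lia.
  rewrite divnDr ?dvdn_mull // mulnK // (_ : B * 3 = B + B * 2); last by lia.
  by rewrite addnA modnDr.
by rewrite divnDr ?dvdn_mull // mulnK.
Qed.

End Lifts.

Lemma gamma_edge_of d x r s :
  1 < x -> x = r %[mod d] -> collatz x = s %[mod d] -> gamma_edge d r s.
Proof.
move=> lt1x xr ys; have x_gt0 : 0 < x by lia.
have y_gt0 : 0 < collatz x by rewrite /collatz -!divn2; case: odd; rewrite divn_gt0 //; lia.
by case ox: (odd x); [right | left]; exists x, (collatz x); do 4 (split => //); rewrite /collatz ox.
Qed.

Lemma gamma_edge_iff B r s : 0 < B ->
  gamma_edge (B * 2) r s <-> s = collatz r %[mod B].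
Proof.
move=> B_gt0; split.
  have reduce x y : x = r %[mod B * 2] -> y = s %[mod B * 2] -> y = collatz x ->
      s = collatz r %[mod B].
    move=> xr ys ey; rewrite -(modn_dvdm s (dvdn_mulr 2 (dvdnn B))) -ys ey.
    by rewrite modn_dvdm ?dvdn_mulr //; apply: collatz_mod.
  by case=> [[x [y [_ [_ [xr [ys [ox ey]]]]]]] | [x [y [_ [_ [xr [ys [ox ey]]]]]]]];
    apply: (reduce x y xr ys); rewrite -ey /collatz ?ox ?(negbTE ox).
move=> E; have lt_s : s %% (B * 2) < B * 2 by rewrite ltn_pmod // muln_gt0 B_gt0.
have [def_s | def_s] := lift_cases B_gt0 lt_s (etrans (modn_dvdm _ (dvdn_mulr _ (dvdnn _))) E).
  apply: (@gamma_edge_of _ (2 * (B * 2) + r)); first by lia.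
    by rewrite modnMDl.
  by rewrite def_s; apply: collatz_mod; rewrite [2 * _]mulnC modnDl.
apply: (@gamma_edge_of _ (r + B * 2)); first by lia.
  by rewrite modnDr.
by rewrite def_s collatz_addr.
Qed.

Section InjectiveSubgraph.
Variables (T : finType) (S : pred T) (f : T -> T).
Hypothesis f_stable : forall x, S x -> S (f x).
Hypothesis f_inj : {in S &, injective f}.

(* f on S and the identity elsewhere: a permutation of T. *)
Definition restrict_perm (x : T) : T := if S x then f x else x.
Local Notation g := restrict_perm.

Lemma restrict_perm_inj : injective g.
Proof.
move=> x y; rewrite /g; case Sx: (S x); case Sy: (S y) => //.
- exact: f_inj.
- by move=> Efy; move: (f_stable Sx); rewrite Efy Sy.
- by move=> Efx; move: (f_stable Sy); rewrite -Efx Sx.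
Qed.

Lemma restrict_perm_connect x y : fconnect g x y -> S y = S x.
Proof.
have gS z : S (g z) = S z by rewrite /g; case: ifP => // /f_stable.
by move/iter_findex <-; elim: (findex _ _ _) => //= i <-; rewrite gS.
Qed.

Lemma next_orbit r u : u \in orbit g r -> next (orbit g r) u = g u.
Proof. by move=> u_r; have /eqP -> := next_cycle (cycle_orbit restrict_perm_inj r) u_r. Qed.

Definition orbit_roots : seq T := [seq x <- enum T | S x && (froot g x == x)].

Definition orbits : seq (seq T) := map (orbit g) orbit_roots.

Lemma mem_orbits x : (x \in flatten orbits) = S x.
Proof.
have g_sym : connect_sym (frel g) := fconnect_sym restrict_perm_inj.
apply/flattenP/idP => [[c /mapP[r] ] | Sx].
  rewrite mem_filter mem_enum andbT => /andP[Sr _] -> .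
  by rewrite -fconnect_orbit => /restrict_perm_connect ->.
exists (orbit g (froot g x)); last by rewrite -fconnect_orbit g_sym connect_root.
apply: map_f; rewrite mem_filter mem_enum andbT (root_root g_sym) eqxx andbT.
by rewrite (restrict_perm_connect (connect_root _ x)).
Qed.

Lemma uniq_orbits : uniq (flatten orbits).
Proof.
have g_sym : connect_sym (frel g) := fconnect_sym restrict_perm_inj.
have : uniq orbit_roots by rewrite filter_uniq ?enum_uniq.
have : {in orbit_roots, forall x, froot g x = x}.
  by move=> x; rewrite mem_filter => /andP[/andP[_ /eqP]].
rewrite /orbits; elim: orbit_roots => //= r rs IH roots /andP[r_rs uniq_rs].
rewrite cat_uniq orbit_uniq IH ?andbT //; last first.
  by move=> x x_rs; apply: roots; rewrite inE x_rs orbT.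
apply/hasPn => y /flattenP[c /mapP[r' r'_rs ->]]; rewrite -!fconnect_orbit.
move=> /(rootP g_sym) Er'; apply/negP => /(rootP g_sym) Er.
have Rr : froot g r = r by apply: roots; rewrite inE eqxx.
have Rr' : froot g r' = r' by apply: roots; rewrite inE r'_rs orbT.
by move: r_rs; rewrite -Rr Er -Er' Rr' r'_rs.
Qed.

Lemma induced_disjoint_cycles_of_inj (E : T -> T -> Prop) (P : T -> Prop) :
  (forall x, P x <-> S x) -> (forall u v, S u -> S v -> (E u v <-> v = f u)) ->
  induced_disjoint_cycles E P.
Proof.
move=> PS Ef; exists orbits; split.
  apply/allP => _ /mapP[x _ ->]; apply/eqP => E0; have := in_orbit g x; by rewrite E0.
split; first exact: uniq_orbits.
split=> [v | u v /PS Su /PS Sv]; first by rewrite mem_orbits; exact: PS.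
rewrite Ef //; split=> [-> | [_ /mapP[r _ ->] [u_r ->]]]; last by rewrite next_orbit /g ?Su.
have := Su; rewrite -mem_orbits => /flattenP[c c_orb u_c].
by exists c => //; case/mapP: c_orb u_c => r _ -> u_r; rewrite next_orbit /g ?Su.
Qed.

End InjectiveSubgraph.

Section HbarCollatz.
Variables n k : nat.
Local Notation N := (n + k).

Lemma hbar_collatz u v : v = collatz u %[mod 2 ^ N] ->
  hbar n.+1 k.+1 v = collatz (hbar n.+1 k.+1 u) %[mod 2 ^ n].
Proof.
move=> E; apply/parity_eq_mod => i lt_in.
rewrite residue_of_parity 1?ltnW // -parityS residue_of_parity //.
congr (odd _); apply: eq_bigr => l _; rewrite addSn parityS.
congr nat_of_bool; apply: (proj2 (parity_eq_mod N _ _) E).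
by have := ltn_ord l; lia.
Qed.

(* The two lifts of a residue mod 2^N differ only in parity N, which the
   window starting at n sees: their images differ. *)
Lemma hbar_lifts_neq v w : v < 2 ^ N.+1 -> w < 2 ^ N.+1 ->
  v = w %[mod 2 ^ N] -> v != w -> hbar n.+1 k.+1 v != hbar n.+1 k.+1 w.
Proof.
move=> lt_v lt_w E; apply: contra_neq => Eh.
have low l : l < k -> parity v (n + l) = parity w (n + l).
  by move=> lt_lk; apply: (proj2 (parity_eq_mod N _ _) E); lia.
have top : parity v N = parity w N.
  have := congr1 (parity^~ n) Eh; rewrite !residue_of_parity // /window_parity.
  rewrite !big_ord_recr /= (eq_bigr (fun l : 'I_k => parity w (n + l) : nat)).
    by rewrite !oddD !oddb => /addbI.
  by move=> l _; rewrite low.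
rewrite -(modn_small lt_v) -(modn_small lt_w); apply/parity_eq_mod => i.
by rewrite ltnS leq_eqVlt => /predU1P[-> // | lt_iN]; apply: (proj2 (parity_eq_mod N _ _) E).
Qed.

(* Two residues with congruent T-images differ only in parity 0, which the
   window starting at 0 sees: their images differ. *)
Lemma hbar_preimages_neq u w : u < 2 ^ N.+1 -> w < 2 ^ N.+1 ->
  collatz u = collatz w %[mod 2 ^ N] -> u != w -> hbar n.+1 k.+1 u != hbar n.+1 k.+1 w.
Proof.
move=> lt_u lt_w E; apply: contra_neq => Eh.
have high l : l < k -> parity u l.+1 = parity w l.+1.
  by move=> lt_lk; rewrite !parityS; apply: (proj2 (parity_eq_mod N _ _) E); lia.
have bottom : odd u = odd w.
  have := congr1 (parity^~ 0) Eh; rewrite !residue_of_parity // /window_parity.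
  rewrite !big_ord_recl /= (eq_bigr (fun l : 'I_k => parity w (lift ord0 l) : nat)).
    by rewrite !oddD !oddb => /addIb.
  by move=> l _; rewrite high.
by rewrite -(modn_small lt_u) -(modn_small lt_w); apply: collatz_mod_inv.
Qed.

End HbarCollatz.

Section LiftCycle.
Variables n k : nat.
Local Notation N := (n + k).
Variable xs : seq 'I_(2 ^ n.+1).
Hypothesis xs_uniq : uniq xs.
Hypothesis xs_cycle :
  induced_is_cycle (fun r s : 'I_(2 ^ n.+1) => gamma_edge (2 ^ n.+1) r s) xs.

Lemma xs_next w t : w \in xs -> t \in xs ->
  (t = next xs w <-> t = collatz w %[mod 2 ^ n]).
Proof.
move=> w_xs t_xs; rewrite -(xs_cycle w_xs t_xs).
by have := gamma_edge_iff w t (expn_gt0 2 n); rewrite -expnSr.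
Qed.

Lemma next_xs_mod w : w \in xs -> next xs w = collatz w %[mod 2 ^ n].
Proof. by move=> w_xs; apply/xs_next; rewrite ?mem_next. Qed.

Definition hbar_ord (r : nat) : 'I_(2 ^ n.+1) :=
  Ordinal (residue_of_lt (window_parity k.+1 r) n.+1).

Definition lifted (r : 'I_(2 ^ N.+1)) : bool := hbar_ord r \in xs.

Definition lift_succ (u v : 'I_(2 ^ N.+1)) : bool := lifted v && (v == collatz u %[mod 2 ^ N]).

Lemma hbar_ord_succ (u v : 'I_(2 ^ N.+1)) : lifted u -> lift_succ u v ->
  hbar_ord v = next xs (hbar_ord u).
Proof. by move=> Lu /andP[Lv /eqP Euv]; apply/xs_next => //; apply: hbar_collatz. Qed.

Lemma lift_succ_unique u v w : lifted u -> lift_succ u v -> lift_succ u w -> v = w.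
Proof.
move=> Lu Sv Sw.
have Evw : v = w %[mod 2 ^ N] by case/andP: Sv => _ /eqP ->; case/andP: Sw => _ /eqP ->.
apply: val_inj; apply: (contraTeq (hbar_lifts_neq (ltn_ord v) (ltn_ord w) Evw)).
have Ehvw := etrans (hbar_ord_succ Lu Sv) (esym (hbar_ord_succ Lu Sw)).
by apply/eqP; exact (congr1 (@nat_of_ord _) Ehvw).
Qed.

(* ... and at least one: of the two lifts of T u, one lies over the
   successor of Hbar u on the cycle. *)
Lemma lift_succ_exists u : lifted u -> exists v, lift_succ u v.
Proof.
move=> Lu; have B_gt0 : 0 < 2 ^ N := expn_gt0 2 N.
have lt_lift t : t %% (2 ^ N * 2) < 2 ^ N.+1 by rewrite expnSr ltn_pmod ?muln_gt0 ?B_gt0.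
pose v1 := Ordinal (lt_lift (collatz u)); pose v2 := Ordinal (lt_lift (collatz u + 2 ^ N)).
have Ev1 : v1 = collatz u %[mod 2 ^ N] by rewrite /= modn_dvdm ?dvdn_mulr.
have Ev2 : v2 = collatz u %[mod 2 ^ N] by rewrite /= modn_dvdm ?dvdn_mulr // modnDr.
have neq_h : hbar n.+1 k.+1 v1 != hbar n.+1 k.+1 v2.
  by apply: hbar_lifts_neq; rewrite ?ltn_ord ?Ev1 ?Ev2 ?lifts_neq.
have lt_h (a : 'I_(2 ^ n.+1)) : (a : nat) < 2 ^ n * 2 by rewrite -expnSr.
have [E | E] := lift_other (expn_gt0 2 n) (lt_h (hbar_ord v1)) (lt_h (hbar_ord v2))
  (lt_h (next xs (hbar_ord u))) (etrans (hbar_collatz Ev1) (esym (next_xs_mod Lu)))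
  (etrans (hbar_collatz Ev2) (esym (next_xs_mod Lu))) neq_h.
- exists v1; rewrite /lift_succ Ev1 eqxx andbT /lifted.
  have <- : next xs (hbar_ord u) = hbar_ord v1 by apply: val_inj.
  by rewrite mem_next.
- exists v2; rewrite /lift_succ Ev2 eqxx andbT /lifted.
  have <- : next xs (hbar_ord u) = hbar_ord v2 by apply: val_inj.
  by rewrite mem_next.
Qed.

Definition lift_next (u : 'I_(2 ^ N.+1)) : 'I_(2 ^ N.+1) := odflt u [pick v | lift_succ u v].

Lemma lift_nextP u : lifted u -> lift_succ u (lift_next u).
Proof.
move=> Lu; rewrite /lift_next; case: pickP => //= none.
by have [v] := lift_succ_exists Lu; rewrite none.
Qed.

Lemma lift_next_lifted u : lifted u -> lifted (lift_next u).
Proof. by case/lift_nextP/andP. Qed.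

(* Equal successors force congruent T-images and equal predecessors on the
   cycle, hence equal vertices. *)
Lemma lift_next_inj : {in lifted &, injective lift_next}.
Proof.
move=> u w Lu Lw E; have /andP[_ /eqP Eu] := lift_nextP Lu.
have /andP[_ /eqP Ew] := lift_nextP Lw.
have Ecoll : collatz u = collatz w %[mod 2 ^ N] by rewrite -Eu E Ew.
have Eh : hbar_ord u = hbar_ord w.
  rewrite -(prev_next xs_uniq (hbar_ord u)) -(hbar_ord_succ Lu (lift_nextP Lu)) E.
  by rewrite (hbar_ord_succ Lw (lift_nextP Lw)) prev_next.
apply: val_inj; apply: (contraTeq (hbar_preimages_neq (ltn_ord u) (ltn_ord w) Ecoll)).
by apply/eqP; exact (congr1 (@nat_of_ord _) Eh).
Qed.

Lemma lifted_edge u v : lifted u -> lifted v ->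
  (gamma_edge (2 ^ N.+1) u v <-> v = lift_next u).
Proof.
move=> Lu Lv; have := gamma_edge_iff u v (expn_gt0 2 N); rewrite -expnSr => ->.
split=> [Euv | ->]; last by case/andP: (lift_nextP Lu) => _ /eqP.
by apply: (lift_succ_unique Lu _ (lift_nextP Lu)); rewrite /lift_succ Lv Euv eqxx.
Qed.

Lemma lifted_iff (r : 'I_(2 ^ N.+1)) :
  (exists2 s : 'I_(2 ^ n.+1), s \in xs & Hbar_rel n.+1 k.+1 r s) <-> lifted r.
Proof.
have lt_r : (r : nat) < 2 ^ (n.+1 + k.+1 - 1) by have -> : n.+1 + k.+1 - 1 = N.+1 by lia.
split=> [[s s_xs] | Lr].
  move/(Hbar_relE lt_r (ltn_ord s)) => Es.
  by rewrite /lifted (_ : hbar_ord r = s) //; apply: val_inj.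
by exists (hbar_ord r) => //; apply/(Hbar_relE lt_r); first exact: residue_of_lt.
Qed.

End LiftCycle.

(* With n = n'+1 and k = k'+1 the fine level is n'+k'+1, and the successor map
   of LiftCycle exhibits the preimage of the cycle as a union of disjoint cycles. *)
Theorem mainTheorem20 (n k : nat) (hn : 0 < n) (hk : 0 < k)
  (xs : seq 'I_(2 ^ n)) :
  xs != [::] -> uniq xs ->
  induced_is_cycle (fun r s : 'I_(2 ^ n) => gamma_edge (2 ^ n) r s) xs ->
  induced_disjoint_cycles
    (fun r s : 'I_(2 ^ (n + k - 1)) => gamma_edge (2 ^ (n + k - 1)) r s)
    (fun r : 'I_(2 ^ (n + k - 1)) => exists2 s : 'I_(2 ^ n), s \in xs & Hbar_rel n k r s).
Proof.
move=> _; case: n hn xs => // n _ xs xs_uniq xs_cycle; case: k hk => // k _.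
have -> : n.+1 + k.+1 - 1 = (n + k).+1 by lia.
apply: (induced_disjoint_cycles_of_inj (lift_next_lifted xs_cycle)).
- exact: lift_next_inj.
- exact: lifted_iff.
- exact: lifted_edge.
Qed.
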